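(* If $G$ is a connected edge-transitive graph, then for every edge $\{a,b\}$ of $G$ the eigenvalue support of $e_a-e_b$ consists of all the non-zero Laplacian eigenvalues of $G$.
   Context: Let $L=\Delta-A$ be the Laplacian of $G$ with spectral decomposition $L=\sum_r\theta_rE_r$ ($\theta_r$ distinct eigenvalues, $E_r$ orthogonal projections onto eigenspaces). The eigenvalue support of a vector $x$ is the set of $\theta_r$ with $E_rx\neq0$. *)

From HB Require Import structures.
From mathcomp Require Import all_boot all_order all_algebra all_fingroup.
From mathcomp Require Import reals.
Set Implicit Arguments. Unset Strict Implicit. Unset Printing Implicit Defensive.
Import Order.TTheory GRing.Theory Num.Theory.
Local Open Scope ring_scope.

Definition simple_graph n (e : rel 'I_n) : Prop :=
  symmetric e /\ irreflexive e.

Definition connected_graph n (e : rel 'I_n) : Prop :=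
  forall a b : 'I_n, connect e a b.

Definition is_aut n (e : rel 'I_n) (s : {perm 'I_n}) : Prop :=
  forall x y, e (s x) (s y) = e x y.

Definition edge_transitive n (e : rel 'I_n) : Prop :=
  forall a b c d : 'I_n, e a b -> e c d ->
    exists s : {perm 'I_n}, is_aut e s /\
      ((s a = c /\ s b = d) \/ (s a = d /\ s b = c)).

Definition adjacency (R : realType) n (e : rel 'I_n) : 'M[R]_n :=
  \matrix_(i, j) (e i j)%:R.
Definition degmx (R : realType) n (e : rel 'I_n) : 'M[R]_n :=
  \matrix_(i, j) (if i == j then #|[set k | e i k]|%:R else 0).
Definition laplacian (R : realType) n (e : rel 'I_n) : 'M[R]_n :=
  degmx R e - adjacency R e.

(* Orthogonal projection onto the eigenspace of M for theta, acting on row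
   vectors: projection onto eigenspace M theta along its orthogonal
   complement kermx (eigenspace M theta)^T. *)
Definition eig_proj (R : realType) n (M : 'M[R]_n) (theta : R) : 'M[R]_n :=
  proj_mx (eigenspace M theta) (kermx (eigenspace M theta)^T).

Definition eig_support (R : realType) n (M : 'M[R]_n) (x : 'rV[R]_n) : pred R :=
  fun theta => eigenvalue M theta && (x *m eig_proj M theta != 0).

Definition unitvec (R : realType) n (a : 'I_n) : 'rV[R]_n := delta_mx 0 a.

(* The projection of x = e_a - e_b onto the theta-eigenspace of L vanishes iff
   every theta-eigenvector v satisfies v_a = v_b.  Since
   2 v L v^T = sum_{i,k} e_ik (v_i - v_k)^2, the kernel of L consists of the
   vectors constant across every edge; in particular 0 is never in the
   support.  Conversely, automorphisms permute the theta-eigenvectors, so if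
   all of them agree at the ends of one edge, edge-transitivity makes them
   agree at the ends of every edge; they then lie in the kernel, which forces
   theta = 0. *)
From HB Require Import structures.
From mathcomp Require Import all_boot all_order all_algebra all_fingroup.
From mathcomp Require Import reals ring.
Set Implicit Arguments. Unset Strict Implicit. Unset Printing Implicit Defensive.
Import Order.TTheory GRing.Theory Num.Theory.
Local Open Scope ring_scope.

Section RealOrthogonality.

Variable R : realFieldType.

Lemma mul_row_tr_eq0 n (w : 'rV[R]_n) : (w *m w^T == 0) = (w == 0).
Proof.
have -> : (w *m w^T == 0) = (\sum_k w 0 k ^+ 2 == 0).
  rewrite [w *m w^T]mx11_scalar -scalemx1 scaler_eq0 -[_%:M]/1 oner_eq0 orbF mxE.
  by rewrite (eq_bigr (fun k => w 0 k ^+ 2)) // => k _; rewrite mxE expr2.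
apply/eqP/eqP => [sq0 | ->]; last by rewrite big1 // => k _; rewrite mxE expr0n.
apply/rowP => k; apply/eqP; rewrite mxE -sqrf_eq0; apply/eqP.
by apply: (psumr_eq0P _ sq0) => // i _; apply: sqr_ge0.
Qed.

Lemma capmx_kermx_tr m n (U : 'M[R]_(m, n)) : (U :&: kermx U^T)%MS = 0.
Proof.
apply/eqP; rewrite -submx0; apply/rV_subP => w.
rewrite sub_capmx => /andP[/submxP[u ->]].
rewrite sub_kermx => /eqP uUU0.
by rewrite submx0 -mul_row_tr_eq0 trmx_mul mulmxA uUU0 mul0mx.
Qed.

Lemma proj_kermx_tr_eq0 n (U : 'M[R]_n) (x : 'rV[R]_n) :
  (x *m proj_mx U (kermx U^T) == 0) = (x *m U^T == 0).
Proof.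
have dxU := capmx_kermx_tr U.
have sxU : (x <= U + kermx U^T)%MS.
  apply: submx_full; rewrite /row_full mxrank_disjoint_sum // mxrank_ker.
  by rewrite mxrank_tr subnKC // rank_leq_col.
rewrite -[in RHS]sub_kermx; apply/eqP/idP => [xP0 | /(proj_mx_0 dxU) //].
by have := proj_mx_compl_sub sxU; rewrite xP0 subr0.
Qed.

End RealOrthogonality.

Lemma unitvec_diff_orthP (R : realType) n m (a b : 'I_n) (A : 'M[R]_(m, n)) :
  reflect (forall i, A i a = A i b) ((unitvec R a - unitvec R b) *m A^T == 0).
Proof.
have -> : (unitvec R a - unitvec R b) *m A^T = \row_i (A i a - A i b).
  by apply/rowP => i; rewrite /unitvec mulmxBl -!rowE !mxE.
apply: (iffP eqP) => [/rowP Ae i | Ae]; last first.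
  by apply/rowP => i; rewrite !mxE Ae subrr.
by apply/eqP; rewrite -subr_eq0; have := Ae i; rewrite !mxE => ->.
Qed.

Lemma unitvec_diff_eigenspace_orthP (R : realType) n (M : 'M[R]_n) theta
    (a b : 'I_n) :
  reflect (forall v : 'rV_n, v *m M = theta *: v -> v 0 a = v 0 b)
          ((unitvec R a - unitvec R b) *m (eigenspace M theta)^T == 0).
Proof.
apply: (iffP idP) => [orth v /eigenspaceP/submxP[u vE] | eig_ab].
  suff /unitvec_diff_orthP-> : (unitvec R a - unitvec R b) *m v^T == 0 by [].
  by rewrite vE trmx_mul mulmxA (eqP orth) mul0mx.
apply/unitvec_diff_orthP => i.
have /eigenspaceP/eig_ab := row_sub i (eigenspace M theta).
by rewrite !mxE.
Qed.

Section Laplacian.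

Variables (R : realType) (n : nat) (e : rel 'I_n).
Hypothesis e_sym : symmetric e.
Local Notation L := (laplacian R e).

Lemma mul_laplacianE (v : 'rV[R]_n) i :
  (v *m L) 0 i = \sum_k (e i k)%:R * (v 0 i - v 0 k).
Proof.
rewrite /laplacian mulmxBr mxE.
have deg_sum : #|[set k | e i k]|%:R = \sum_k (e i k)%:R :> R.
  rewrite -sum1_card natr_sum big_mkcond; apply: eq_bigr => k _.
  by rewrite inE; case: (e i k).
have -> : (v *m degmx R e) 0 i = v 0 i * #|[set k | e i k]|%:R.
  rewrite !mxE (bigD1 i) //= big1 ?addr0 => [|k /negbTE ki]; rewrite !mxE ?eqxx //.
  by rewrite ki mulr0.
rewrite deg_sum mulr_sumr !mxE -sumrB.
by apply: eq_bigr => k _; rewrite !mxE e_sym mulrBr !(mulrC (e k i)%:R).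
Qed.

Lemma laplacian_quad_form (v : 'rV[R]_n) :
  (\sum_i v 0 i * (v *m L) 0 i) *+ 2 =
  \sum_i \sum_k (e i k)%:R * (v 0 i - v 0 k) ^+ 2.
Proof.
set S := \sum_i v 0 i * _.
have S_swap : S = \sum_i \sum_k (e i k)%:R * (v 0 k * (v 0 k - v 0 i)).
  rewrite /S exchange_big; apply: eq_bigr => i _; rewrite mul_laplacianE mulr_sumr.
  by apply: eq_bigr => k _; rewrite [e k i]e_sym mulrCA.
rewrite mulr2n {1}S_swap /S -big_split; apply: eq_bigr => i _.
rewrite mul_laplacianE mulr_sumr -big_split; apply: eq_bigr => k _ /=.
ring.
Qed.

Lemma laplacian_kerP (v : 'rV[R]_n) :
  reflect (forall c d, e c d -> v 0 c = v 0 d) (v *m L == 0).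
Proof.
apply: (iffP eqP) => [vL0 c d ecd | v_edge]; last first.
  apply/rowP => i; rewrite mul_laplacianE mxE big1 // => k _.
  by case eik: (e i k); rewrite ?mul0r // (v_edge _ _ eik) subrr mulr0.
have term_ge0 i k : 0 <= (e i k)%:R * (v 0 i - v 0 k) ^+ 2 :> R.
  by rewrite mulr_ge0 ?sqr_ge0.
have form0 : \sum_i \sum_k (e i k)%:R * (v 0 i - v 0 k) ^+ 2 = 0 :> R.
  by rewrite -laplacian_quad_form vL0 big1 ?mul0rn // => i _; rewrite mxE mulr0.
have row_c0 : \sum_k (e c k)%:R * (v 0 c - v 0 k) ^+ 2 = 0 :> R.
  by apply: (psumr_eq0P _ form0) => // i _; apply: sumr_ge0.
have := psumr_eq0P (fun k _ => term_ge0 c k) row_c0 (i := d) isT.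
by rewrite ecd mul1r => /eqP; rewrite sqrf_eq0 subr_eq0 => /eqP.
Qed.

Lemma mul_laplacian_aut (s : {perm 'I_n}) (v : 'rV[R]_n) : is_aut e s ->
  (\row_j v 0 (s j)) *m L = \row_j (v *m L) 0 (s j).
Proof.
move=> s_aut; apply/rowP => j; rewrite mxE !mul_laplacianE.
rewrite [RHS](reindex_inj (@perm_inj _ s)).
by apply: eq_bigr => k _; rewrite s_aut !mxE.
Qed.

Lemma edge_transitive_eigenvector_ker theta a b :
  edge_transitive e -> e a b ->
  (forall v : 'rV_n, v *m L = theta *: v -> v 0 a = v 0 b) ->
  forall v : 'rV_n, v *m L = theta *: v -> v *m L = 0.
Proof.
move=> e_tr eab ab_eq v vL; apply/eqP/laplacian_kerP => c d ecd.
have [s [s_aut s_ab]] := e_tr a b c d eab ecd.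
have /ab_eq : (\row_j v 0 (s j)) *m L = theta *: \row_j v 0 (s j).
  by rewrite mul_laplacian_aut // vL; apply/rowP => j; rewrite !mxE.
by rewrite !mxE; case: s_ab => -[-> ->].
Qed.

End Laplacian.

Theorem mainTheorem13 (R : realType) (n : nat) (e : rel 'I_n) :
  simple_graph e -> connected_graph e -> edge_transitive e ->
  forall a b : 'I_n, e a b ->
  forall theta : R,
    eig_support (laplacian R e) (unitvec R a - unitvec R b) theta =
    (eigenvalue (laplacian R e) theta && (theta != 0)).
Proof.
move=> [e_sym _] _ e_tr a b eab theta.
rewrite /eig_support /eig_proj proj_kermx_tr_eq0.
have [eig_theta /=|//] := boolP (eigenvalue (laplacian R e) theta).
have [-> | theta_neq0] /= := eqVneq theta 0.
  apply/negbTE/negPn/unitvec_diff_eigenspace_orthP => v.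
  by rewrite scale0r => /eqP/(laplacian_kerP e_sym)/(_ a b eab).
apply/negP => /unitvec_diff_eigenspace_orthP ab_eq.
case/eigenvalueP: eig_theta => v vL v_neq0.
have := edge_transitive_eigenvector_ker e_sym e_tr eab ab_eq vL.
by rewrite vL => /eqP; rewrite scaler_eq0 (negbTE theta_neq0) (negbTE v_neq0).
Qed.
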